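(* Let $T$ be a Boolean algebra (with order $\le$, meet $\land$, join $\lor$ and complement $\neg$), and let $(a,g)$ and $(a',g')$ be contracts over $T$. Let $\mathcal{C}_c=(a_c,g_c)$ be their composition, given by $$a_c=(a\land a')\lor(a\land\neg g)\lor(a'\land\neg g'),\qquad g_c=(g\lor\neg a)\land(g'\lor\neg a').$$ Suppose that $a''\in T$ satisfies $a''\land g\land a\le a'\land g\land a$ and that $g''\in T$ satisfies $g\land g'\le g''$. Then the contract $(a\land a'',\,g'')$ is a relaxation of $\mathcal{C}_c$, i.e. $\mathcal{C}_c\le (a\land a'',g'')$.
   Context: A contract over a Boolean algebra $T$ (the ''term algebra'') is a pair $(a,g)$ of elements of $T$, called assumptions and guarantees. Contracts are ordered by refinement: for contracts $\mathcal{C}=(a,g)$ and $\mathcal{C}'=(a',g')$, $\mathcal{C}\le\mathcal{C}'$ (read ''$\mathcal{C}$ refines $\mathcal{C}'$'', or ''$\mathcal{C}'$ is a relaxation of $\mathcal{C}$'') holds iff $a'\le a$ and $g\lor\neg a\le g'\lor\neg a'$. *)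

(* A Boolean algebra is a complemented distributive lattice
   with top and bottom: MathComp's ctbDistrLatticeType. *)
From mathcomp Require Import all_boot all_order.
Set Implicit Arguments. Unset Strict Implicit. Unset Printing Implicit Defensive.
Import Order.Theory.
Local Open Scope order_scope.

(* A contract over T: pair (assumptions, guarantees). *)
Definition contract (d : Order.disp_t) (T : ctbDistrLatticeType d) : Type := (T * T)%type.

Definition refines (d : Order.disp_t) (T : ctbDistrLatticeType d)
  (C C' : contract T) : Prop :=
  (C'.1 <= C.1) /\ (C.2 `|` ~` C.1 <= C'.2 `|` ~` C'.1).

Definition compose (d : Order.disp_t) (T : ctbDistrLatticeType d)
  (C C' : contract T) : contract T :=
  let: (a, g) := C in let: (a', g') := C' in
  ((a `&` a') `|` (a `&` ~` g) `|` (a' `&` ~` g'),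
   (g `|` ~` a) `&` (g' `|` ~` a')).

From mathcomp Require Import all_boot all_order.
Import Order.Theory.
Local Open Scope order_scope.

(* The complement of the composed assumption lies below the composed
   guarantee, so refining it only requires a ∧ a'' ≤ a_c and that the
   composed guarantee, restricted to a ∧ a'', imply g''.  The first follows
   by splitting a ∧ a'' along g: where g holds the hypothesis on a'' puts it
   below a ∧ a', elsewhere it is below a ∧ ¬g.  For the second, on a ∧ a''
   the composed guarantee yields g by modus ponens, hence a' by the
   hypothesis on a'', hence g' by modus ponens again. *)

Section BooleanAlgebra.
Context {d : Order.disp_t} {T : ctbDistrLatticeType d}.
Implicit Types x y z : T.

Lemma leI_shunt x y z : (x `&` y <= z) = (x <= z `|` ~` y).
Proof. by rewrite -[y in LHS]complK -diffE leBLR joinC. Qed.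

Lemma leI_modus_ponens x y : (y `|` ~` x) `&` x <= y.
Proof. by rewrite leI_shunt. Qed.

Lemma le_by_cases x y z : x `&` z <= y -> x `&` ~` z <= y -> x <= y.
Proof. by move=> xzy xCzy; rewrite -[x]meetx1 -(joinxC z) meetUr leUx xzy. Qed.

Lemma refines_weaker_assumption (C C' : contract T) :
  ~` C.1 <= C.2 -> C'.1 <= C.1 -> C.2 `&` C'.1 <= C'.2 -> refines C C'.
Proof.
move=> CaCg le_a le_g; split=> //.
by rewrite (join_l CaCg) -leI_shunt.
Qed.

Section Composition.
Variables a g a' g' : T.
Local Notation Cc := (compose (a, g) (a', g')).
Local Notation gc := ((g `|` ~` a) `&` (g' `|` ~` a')).

Lemma compose_compl_assumption : ~` Cc.1 <= Cc.2.
Proof.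
rewrite /= !complU !complI !complK lexI (joinC g) (joinC g') leIr andbT.
by rewrite -meetA meetCA leIl.
Qed.

Lemma compose_assumption_ge x :
  x `&` g `&` a <= a' `&` g `&` a -> a `&` x <= Cc.1.
Proof.
move=> hx; rewrite /=; apply: (le_by_cases _ _ g).
  have le_aa' : a `&` x `&` g <= a `&` a'.
    rewrite lexI leIxl ?leIl //=.
    by rewrite (meetC a) meetAC (le_trans hx) // -meetA leIl.
  exact: le_trans le_aa' (le_trans (leUl _ _) (leUl _ _)).
have le_aCg : a `&` x `&` ~` g <= a `&` ~` g by rewrite leI2 ?leIl.
exact: le_trans le_aCg (le_trans (leUr _ _) (leUl _ _)).
Qed.

Lemma compose_guarantee_le : Cc.2 `&` a `&` a' <= g `&` g'.
Proof.
rewrite /= lexI; apply/andP; split.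
  by rewrite leIxl // meetAC leIxl // leI_modus_ponens.
apply: le_trans (leI_modus_ponens a' g').
by rewrite leI2 // leIxl // leIr.
Qed.

Lemma compose_guarantee_meet_le x :
  x `&` g `&` a <= a' `&` g `&` a -> Cc.2 `&` (a `&` x) <= g `&` g'.
Proof.
move=> hx; apply: le_trans compose_guarantee_le; rewrite /=.
have gc_ax : gc `&` (a `&` x) <= a `&` x by exact: leIr.
have gc_a : gc `&` (a `&` x) <= a := le_trans gc_ax (leIl _ _).
have gc_g : gc `&` (a `&` x) <= g.
  by apply: le_trans (leI_modus_ponens a g); rewrite leI2 ?leIl.
have gc_a' : gc `&` (a `&` x) <= a'.
  have a'ga : a' `&` g `&` a <= a' by rewrite -meetA leIl.
  apply: le_trans _ (le_trans hx a'ga).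
  by rewrite !lexI gc_g gc_a (le_trans gc_ax (leIr _ _)).
by rewrite lexI gc_a' andbT lexI leIl gc_a.
Qed.

End Composition.
End BooleanAlgebra.

Theorem theorem1 (d : Order.disp_t) (T : ctbDistrLatticeType d)
  (a g a' g' a'' g'' : T)
  (ha : a'' `&` g `&` a <= a' `&` g `&` a)
  (hg : g `&` g' <= g'') :
  refines (compose (a, g) (a', g')) (a `&` a'', g'').
Proof.
apply: refines_weaker_assumption => /=.
- exact: compose_compl_assumption.
- exact: compose_assumption_ge ha.
- apply: le_trans hg; exact: compose_guarantee_meet_le ha.
Qed.
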